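(* Suppose $\mathsf{E}\mathrm{d}(p_i^*,P_i)\le\lambda$ for every $i\in\{1,\dots,n\}$. Let $T_m$ be the minimum connected subtree of $T$ containing all the medians $p_1^*,\dots,p_n^*$. Then there is an optimal solution of the center-coverage problem (a minimum-cardinality set of points of $T$ such that every $P_i$ is covered by at least one of them) in which every center lies on $T_m$.
   Context: $T$ is a tree with positive edge lengths, edges regarded as segments, $d(\cdot,\cdot)$ the path-length distance. Uncertain point $P_i$ ($1\le i\le n$) has weight $w_i\ge0$ and locations $p_{ij}$ with probabilities $f_{ij}\ge0$ summing to $1$; $\mathsf{E}\mathrm{d}(x,P_i)=w_i\sum_j f_{ij}d(x,p_{ij})$. For each $i$, $p_i^*$ is a fixed vertex of $T$ minimizing $\mathsf{E}\mathrm{d}(x,P_i)$ over all points $x$ of $T$ (a median of $P_i$). A point $x$ covers $P_i$ if $\mathsf{E}\mathrm{d}(x,P_i)\le\lambda$, for a given $\lambda\ge 0$. *)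

From Stdlib Require Import Reals Lra List ClassicalEpsilon.
Import ListNotations.
Open Scope R_scope.

(* Vertices are the naturals 0..N-1.  An edge is ((a, b), len): a segment of
   length len joining vertex a to vertex b. *)
Definition edge := ((nat * nat) * R)%type.
Definition e_src (x : edge) : nat := fst (fst x).
Definition e_dst (x : edge) : nat := snd (fst x).
Definition e_len (x : edge) : R := snd x.
Definition edge_of (E : list edge) (e : nat) : edge := nth e E ((0%nat, 0%nat), 0).

Inductive walk (E : list edge) : nat -> nat -> R -> Prop :=
| walk_nil u : walk E u u 0
| walk_cons e u w v L :
    (e < length E)%nat ->
    ((e_src (edge_of E e) = u /\ e_dst (edge_of E e) = w) \/
     (e_dst (edge_of E e) = u /\ e_src (edge_of E e) = w)) ->
    walk E w v L -> walk E u v (e_len (edge_of E e) + L).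

Definition is_tree (N : nat) (E : list edge) : Prop :=
  (forall e, (e < length E)%nat ->
     (e_src (edge_of E e) < N)%nat /\ (e_dst (edge_of E e) < N)%nat /\
     e_src (edge_of E e) <> e_dst (edge_of E e) /\ 0 < e_len (edge_of E e)) /\
  (N = S (length E)) /\
  (forall u v, (u < N)%nat -> (v < N)%nat -> exists L, walk E u v L).

Definition is_vdist (E : list edge) (u v : nat) (L : R) : Prop :=
  walk E u v L /\ forall L', walk E u v L' -> L <= L'.
Definition vdist (E : list edge) (u v : nat) : R :=
  epsilon (inhabits 0) (is_vdist E u v).

(** Points of T: a vertex, or a point of edge e at distance t from its
    source endpoint e_src (0 <= t <= length of e). *)
Inductive pt : Type :=
| PV : nat -> pt
| PE : nat -> R -> pt.

Definition valid_pt (N : nat) (E : list edge) (x : pt) : Prop :=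
  match x with
  | PV v => (v < N)%nat
  | PE e t => (e < length E)%nat /\ 0 <= t /\ t <= e_len (edge_of E e)
  end.

Definition dpv (E : list edge) (x : pt) (v : nat) : R :=
  match x with
  | PV u => vdist E u v
  | PE e t => Rmin (t + vdist E (e_src (edge_of E e)) v)
                   ((e_len (edge_of E e) - t) + vdist E (e_dst (edge_of E e)) v)
  end.

Definition dist (E : list edge) (x y : pt) : R :=
  match x, y with
  | PV u, _ => dpv E y u
  | PE e s, PV v => dpv E x v
  | PE e s, PE f t =>
      if Nat.eq_dec e f then Rabs (s - t)
      else Rmin (s + dpv E y (e_src (edge_of E e)))
                ((e_len (edge_of E e) - s) + dpv E y (e_dst (edge_of E e)))
  end.

Definition sumR (m : nat) (g : nat -> R) : R :=
  fold_right Rplus 0 (map g (seq 0 m)).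

Definition Ed (E : list edge) (w : nat -> R) (m : nat -> nat)
  (loc : nat -> nat -> pt) (f : nat -> nat -> R) (x : pt) (i : nat) : R :=
  w i * sumR (m i) (fun j => f i j * dist E x (loc i j)).

(* A connected subset of a tree is one containing, with any two of its points,
   the whole (unique) path between them; z lies on the path from x to y iff
   d(x,z) + d(z,y) = d(x,y). *)
Definition connected_subset (N : nat) (E : list edge) (S : pt -> Prop) : Prop :=
  forall x y z, valid_pt N E x -> valid_pt N E y -> valid_pt N E z ->
    S x -> S y -> dist E x z + dist E z y = dist E x y -> S z.

Definition in_min_subtree (N : nat) (E : list edge) (n : nat) (p : nat -> nat)
  (x : pt) : Prop :=
  forall S : pt -> Prop, connected_subset N E S ->
    (forall i, (i < n)%nat -> S (PV (p i))) -> S x.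

Definition covers_all (E : list edge) (n : nat) (w : nat -> R) (m : nat -> nat)
  (loc : nat -> nat -> pt) (f : nat -> nat -> R) (lam : R) (C : list pt) : Prop :=
  forall i, (i < n)%nat -> exists c, In c C /\ Ed E w m loc f c i <= lam.

(* Each edge f of the tree gives a coordinate of a point: its position along f if it lies on
   f, and otherwise 0 or the length of f according to the side of f it lies on.  The path
   distance is the l1 distance of these coordinates, so "z lies on the path from x to y"
   becomes coordinatewise betweenness, which can be analysed one edge at a time.

   Let c be a center outside the hull of the medians (the points between two medians).  The
   hull vertex v nearest to c lies on the path from c to every median p_i^*.  Along such a
   path d(., q) is convex, hence so is Ed(., P_i), and Ed(v, P_i) is at most
   max (Ed(c, P_i), Ed(p_i^*, P_i)) <= lambda.  Replacing every center of a minimum cover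
   by such a hull point gives a minimum cover inside T_m.  Only Ed(p_i^*, P_i) <= lambda is
   used, not the minimality of the medians. *)

From Pilot Require Import Defs.
From Stdlib Require Import Reals List.
From Stdlib Require Import Lra Lia Wf_nat ClassicalEpsilon Classical.
Import ListNotations.
Open Scope R_scope.

Lemma sumR_S m g : sumR (S m) g = sumR m g + g m.
Proof.
  unfold sumR. rewrite seq_S, map_app, fold_right_app. simpl.
  generalize (g m); induction (map g (seq 0 m)) as [|a l IH]; intros x; simpl; [lra|].
  rewrite IH; lra.
Qed.

Lemma sumR_ext m g h : (forall i, (i < m)%nat -> g i = h i) -> sumR m g = sumR m h.
Proof.
  induction m; intros H; [reflexivity|].
  rewrite !sumR_S, IHm by (intros; apply H; lia). rewrite H by lia. reflexivity.
Qed.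

Lemma sumR_zero m : sumR m (fun _ => 0) = 0.
Proof. induction m; [reflexivity|]. rewrite sumR_S, IHm. lra. Qed.

Lemma sumR_add m g h : sumR m (fun i => g i + h i) = sumR m g + sumR m h.
Proof. induction m; [unfold sumR; simpl; lra|]. rewrite !sumR_S, IHm. lra. Qed.

Lemma sumR_scal m c g : sumR m (fun i => c * g i) = c * sumR m g.
Proof. induction m; [unfold sumR; simpl; lra|]. rewrite !sumR_S, IHm. lra. Qed.

Lemma sumR_le m g h : (forall i, (i < m)%nat -> g i <= h i) -> sumR m g <= sumR m h.
Proof.
  induction m; intros H; [unfold sumR; simpl; lra|].
  rewrite !sumR_S. pose proof (IHm (fun i Hi => H i ltac:(lia))). pose proof (H m ltac:(lia)).
  lra.
Qed.

Lemma sumR_lt m g h e : (forall i, (i < m)%nat -> g i <= h i) -> (e < m)%nat -> g e < h e ->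
  sumR m g < sumR m h.
Proof.
  induction m; intros H He Hlt; [lia|].
  rewrite !sumR_S. pose proof (H m ltac:(lia)).
  destruct (Nat.eq_dec e m) as [->|Hne].
  - pose proof (sumR_le m g h (fun i Hi => H i ltac:(lia))). lra.
  - pose proof (IHm (fun i Hi => H i ltac:(lia)) ltac:(lia) Hlt). lra.
Qed.

Lemma sumR_split m g e : (e < m)%nat ->
  sumR m g = g e + sumR m (fun i => if Nat.eq_dec i e then 0 else g i).
Proof.
  induction m; intros He; [lia|].
  rewrite !sumR_S. destruct (Nat.eq_dec m e) as [->|Hne]; [|rewrite IHm by lia; lra].
  rewrite (sumR_ext e (fun i => if Nat.eq_dec i e then 0 else g i) g); [|intros i Hi].
  - destruct (Nat.eq_dec e e); [lra|congruence].
  - destruct (Nat.eq_dec i e); [lia|auto].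
Qed.

Lemma sumR_single m g e : (e < m)%nat -> (forall i, (i < m)%nat -> i <> e -> g i = 0) ->
  sumR m g = g e.
Proof.
  intros He H. rewrite (sumR_split m g e He), (sumR_ext m _ (fun _ => 0)), sumR_zero; [lra|].
  intros i Hi. destruct (Nat.eq_dec i e); auto.
Qed.

(* [a] is the point at position [s] of the segment from [b] to [c], which differ only on axis
   [e]; its l1 distance to a target [t] at an end of that axis is the shorter of the routes
   through [b] and through [c]. *)
Lemma Rmin_sumR_through_ends m e (a b c t : nat -> R) s L : (e < m)%nat ->
  (forall f, (f < m)%nat -> f <> e -> a f = b f /\ a f = c f) ->
  b e = 0 -> c e = L -> a e = s -> 0 <= s <= L -> (t e = 0 \/ t e = L) ->
  Rmin (s + sumR m (fun f => Rabs (b f - t f))) (L - s + sumR m (fun f => Rabs (c f - t f)))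
  = sumR m (fun f => Rabs (a f - t f)).
Proof.
  intros He Habc Hb Hc Ha Hs Ht.
  rewrite (sumR_split m (fun f => Rabs (b f - t f)) e He),
    (sumR_split m (fun f => Rabs (c f - t f)) e He),
    (sumR_split m (fun f => Rabs (a f - t f)) e He).
  rewrite (sumR_ext m (fun i => if Nat.eq_dec i e then 0 else Rabs (b i - t i))
     (fun i => if Nat.eq_dec i e then 0 else Rabs (a i - t i))).
  rewrite (sumR_ext m (fun i => if Nat.eq_dec i e then 0 else Rabs (c i - t i))
     (fun i => if Nat.eq_dec i e then 0 else Rabs (a i - t i))).
  - rewrite Hb, Hc, Ha.
    destruct Ht as [-> | ->]; unfold Rmin; repeat destruct Rle_dec; unfold Rabs in *;
      repeat destruct Rcase_abs; lra.
  - intros f Hf. destruct (Nat.eq_dec f e); auto. destruct (Habc f Hf n); congruence.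
  - intros f Hf. destruct (Nat.eq_dec f e); auto. destruct (Habc f Hf n); congruence.
Qed.

Definition Rbetween a b c := Rabs (a - b) + Rabs (b - c) = Rabs (a - c).

Lemma Rbetween_refl_l a c : Rbetween a a c.
Proof. unfold Rbetween. rewrite Rminus_diag, Rabs_R0. lra. Qed.

Lemma Rbetween_refl_r a c : Rbetween a c c.
Proof. unfold Rbetween. rewrite Rminus_diag, Rabs_R0. lra. Qed.

Lemma Rbetween_end x z y L : 0 <= x <= L -> 0 <= y <= L -> (z = 0 \/ z = L) -> 0 < L ->
  Rbetween x z y <-> x = z \/ y = z.
Proof.
  intros Hx Hy Hz HL. unfold Rbetween. split.
  - intros H. destruct (Req_dec_T x z); auto. destruct (Req_dec_T y z); auto. exfalso.
    destruct Hz; subst; unfold Rabs in *; repeat destruct Rcase_abs; lra.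
  - intros [<-| <-]; unfold Rabs; repeat destruct Rcase_abs; lra.
Qed.

Lemma eq_of_two_values a b c L : (a = 0 \/ a = L) -> (b = 0 \/ b = L) -> (c = 0 \/ c = L) ->
  a <> c -> b <> c -> a = b.
Proof. intros [->| ->] [->| ->] [->| ->]; intros; congruence. Qed.

Lemma exists_argmin_lt (P : nat -> Prop) (g : nat -> R) M : (exists v, (v < M)%nat /\ P v) ->
  exists v, (v < M)%nat /\ P v /\ forall v', (v' < M)%nat -> P v' -> g v <= g v'.
Proof.
  induction M; intros [v [Hv HP]]; [lia|].
  destruct (classic (exists v, (v < M)%nat /\ P v)) as [Hex|Hnex].
  - destruct (IHM Hex) as [v0 [Hv0 [HP0 Hmin]]].
    destruct (classic (P M /\ g M < g v0)) as [[HPM Hlt]|Hno].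
    + exists M. split; [lia|]. split; auto. intros v' Hv' HPv'.
      destruct (Nat.eq_dec v' M); [subst; lra|]. specialize (Hmin v' ltac:(lia) HPv'). lra.
    + exists v0. split; [lia|]. split; auto. intros v' Hv' HPv'.
      destruct (Nat.eq_dec v' M); [subst|apply Hmin; auto; lia].
      destruct (Rle_dec (g v0) (g M)); auto. exfalso; apply Hno; split; auto; lra.
  - assert (v = M) as ->.
    { destruct (Nat.eq_dec v M); auto. exfalso; apply Hnex; exists v; split; auto; lia. }
    exists M. split; [lia|]. split; auto. intros v' Hv' HPv'.
    destruct (Nat.eq_dec v' M); [subst; lra|].
    exfalso; apply Hnex; exists v'; split; auto; lia.
Qed.

Inductive reach (Es : list (nat * nat)) : nat -> nat -> Prop :=
| reach_refl u : reach Es u u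
| reach_step u v w : In (u, v) Es \/ In (v, u) Es -> reach Es v w -> reach Es u w.

Lemma reach_trans Es u v w : reach Es u v -> reach Es v w -> reach Es u w.
Proof. induction 1; intros; auto. econstructor; eauto. Qed.

Lemma reach_sym Es u v : reach Es u v -> reach Es v u.
Proof.
  induction 1; [constructor|].
  apply reach_trans with v; auto. econstructor; [|constructor]. tauto.
Qed.

Lemma reach_cons Es a b u v : reach ((a, b) :: Es) u v ->
  reach Es u v \/ ((reach Es u a \/ reach Es u b) /\ (reach Es v a \/ reach Es v b)).
Proof.
  induction 1 as [u|u x w Hin Hr IH]; [left; constructor|].
  simpl in Hin. destruct Hin as [[Heq|Hin]|[Heq|Hin]].
  - injection Heq as <- <-. destruct IH as [IH|[IH1 IH2]].
    + right. split; [left; constructor|]. right. apply reach_sym; auto.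
    + right; split; auto. left; constructor.
  - destruct IH as [IH|[IH1 IH2]]; [left; econstructor; eauto|].
    right. split; auto. destruct IH1; [left|right]; econstructor; eauto.
  - injection Heq as <- <-. destruct IH as [IH|[IH1 IH2]].
    + right. split; [right; constructor|]. left. apply reach_sym; auto.
    + right; split; auto. right; constructor.
  - destruct IH as [IH|[IH1 IH2]]; [left; econstructor; eauto|].
    right. split; auto. destruct IH1; [left|right]; econstructor; eauto.
Qed.

Fixpoint pairwise_unreachable (Es : list (nat * nat)) (R : list nat) : Prop :=
  match R with
  | [] => True
  | r :: R' => (forall x, In x R' -> ~ reach Es r x) /\ pairwise_unreachable Es R'
  end.

Lemma pairwise_unreachable_filter Es P R :
  pairwise_unreachable Es R -> pairwise_unreachable Es (filter P R).
Proof.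
  induction R; simpl; auto. intros [H1 H2]. destruct (P a); simpl; auto.
  split; auto. intros x Hx. apply filter_In in Hx. apply H1; tauto.
Qed.

Lemma pairwise_unreachable_nil_seq s k : pairwise_unreachable [] (seq s k).
Proof.
  revert s; induction k; simpl; auto. intros s. split; auto.
  intros x Hx Hr. apply in_seq in Hx. inversion Hr; subst; [lia|]. simpl in *; tauto.
Qed.

Definition unreachable_from Es b x : bool :=
  if excluded_middle_informative (reach Es x b) then false else true.

Lemma filter_unreachable_length Es b R : pairwise_unreachable Es R ->
  (length R <= S (length (filter (unreachable_from Es b) R)))%nat.
Proof.
  induction R as [|a R IH]; simpl; intros HR; [lia|]. destruct HR as [H1 H2].
  unfold unreachable_from at 1. destruct (excluded_middle_informative (reach Es a b)) as [Hab|].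
  - enough (filter (unreachable_from Es b) R = R) as -> by lia.
    apply forallb_filter_id, forallb_forall. intros x Hx. unfold unreachable_from.
    destruct (excluded_middle_informative (reach Es x b)); auto.
    exfalso. apply (H1 x Hx). apply reach_trans with b; auto. apply reach_sym; auto.
  - simpl. specialize (IH H2). lia.
Qed.

Lemma pairwise_unreachable_cons Es a b R :
  pairwise_unreachable Es R -> (forall x, In x R -> ~ reach Es x b) ->
  pairwise_unreachable ((a, b) :: Es) R.
Proof.
  induction R as [|r R IH]; simpl; auto. intros [H1 H2] Hb. split; [|auto].
  intros x Hx Hr. apply reach_cons in Hr. destruct Hr as [Hr|[[Ha|Hb'] [Hxa|Hxb]]].
  - exact (H1 x Hx Hr).
  - apply (H1 x Hx). apply reach_trans with a; auto. apply reach_sym; auto.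
  - exact (Hb x (or_intror Hx) Hxb).
  - exact (Hb r (or_introl eq_refl) Hb').
  - exact (Hb r (or_introl eq_refl) Hb').
Qed.

(* A graph with vertices [0..N-1] and edge list [Es] has at least [N - |Es|] components. *)
Lemma exists_unreachable_family N Es : exists R, pairwise_unreachable Es R /\
  (forall x, In x R -> (x < N)%nat) /\ (N <= length R + length Es)%nat.
Proof.
  induction Es as [|[a b] Es IH].
  - exists (seq 0 N). split; [apply pairwise_unreachable_nil_seq|]. split.
    + intros x Hx; apply in_seq in Hx; lia.
    + rewrite length_seq; simpl; lia.
  - destruct IH as [R [HR [Hlt Hlen]]].
    exists (filter (unreachable_from Es b) R). split; [|split].
    + apply pairwise_unreachable_cons; [apply pairwise_unreachable_filter; auto|].
      intros x Hx. apply filter_In in Hx. unfold unreachable_from in Hx.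
      destruct (excluded_middle_informative (reach Es x b)); auto. destruct Hx; discriminate.
    + intros x Hx. apply filter_In in Hx. apply Hlt; tauto.
    + pose proof (filter_unreachable_length Es b R HR). simpl. lia.
Qed.

Lemma connected_edges_length N Es :
  (forall u v, (u < N)%nat -> (v < N)%nat -> reach Es u v) -> (N <= S (length Es))%nat.
Proof.
  intros Hconn. destruct (exists_unreachable_family N Es) as [R [HR [Hlt Hlen]]].
  destruct R as [|r1 [|r2 R]]; simpl in Hlen; try lia.
  destruct HR as [H1 _]. exfalso. apply (H1 r2); [simpl; auto|].
  apply Hconn; apply Hlt; simpl; auto.
Qed.

Section Tree.
Variable N : nat.
Variable E : list edge.
Hypothesis Hedge : forall e, (e < length E)%nat ->
  (e_src (edge_of E e) < N)%nat /\ (e_dst (edge_of E e) < N)%nat /\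
  e_src (edge_of E e) <> e_dst (edge_of E e) /\ 0 < e_len (edge_of E e).
Hypothesis HN : N = S (length E).
Hypothesis Hconn : forall u v, (u < N)%nat -> (v < N)%nat -> exists L, walk E u v L.

Definition src e := e_src (edge_of E e).
Definition dst e := e_dst (edge_of E e).
Definition len e := e_len (edge_of E e).
Definition adj e u w := (src e = u /\ dst e = w) \/ (dst e = u /\ src e = w).

Lemma adj_sym e u w : adj e u w -> adj e w u.
Proof. unfold adj; tauto. Qed.

Lemma src_lt e : (e < length E)%nat -> (src e < N)%nat.
Proof. intros He. apply (Hedge e He). Qed.

Lemma dst_lt e : (e < length E)%nat -> (dst e < N)%nat.
Proof. intros He. apply (Hedge e He). Qed.

Lemma len_pos e : (e < length E)%nat -> 0 < len e.
Proof. intros He. apply (Hedge e He). Qed.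

Inductive walk_avoid (f : nat) : nat -> nat -> Prop :=
| walk_avoid_nil u : walk_avoid f u u
| walk_avoid_cons e u w v : (e < length E)%nat -> e <> f -> adj e u w ->
    walk_avoid f w v -> walk_avoid f u v.

Lemma walk_avoid_trans f u v w : walk_avoid f u v -> walk_avoid f v w -> walk_avoid f u w.
Proof. induction 1; intros; auto. econstructor; eauto. Qed.

Lemma walk_avoid_step f e u w : (e < length E)%nat -> e <> f -> adj e u w -> walk_avoid f u w.
Proof. intros. econstructor; eauto. constructor. Qed.

Lemma walk_avoid_sym f u v : walk_avoid f u v -> walk_avoid f v u.
Proof.
  induction 1; [constructor|]. apply walk_avoid_trans with w; auto.
  eapply walk_avoid_step; eauto. apply adj_sym; auto.
Qed.

Lemma walk_avoid_or_ends u w L : walk E u w L -> forall f,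
  walk_avoid f u w \/ walk_avoid f u (src f) \/ walk_avoid f u (dst f).
Proof.
  induction 1 as [u|e u x v L' He Hadj Hw IH]; intros f; [left; constructor|].
  destruct (Nat.eq_dec e f) as [->|Hef].
  - right. destruct Hadj as [[H1 H2]|[H1 H2]]; subst; [left|right]; constructor.
  - assert (Hux : walk_avoid f u x) by (eapply walk_avoid_step; eauto).
    destruct (IH f) as [H|[H|H]]; [left|right; left|right; right]; eapply walk_avoid_trans; eauto.
Qed.

Lemma walk_avoid_to_end f v : (f < length E)%nat -> (v < N)%nat ->
  walk_avoid f v (src f) \/ walk_avoid f v (dst f).
Proof.
  intros Hf Hv. destruct (Hconn v (src f) Hv (src_lt f Hf)) as [L HL].
  destruct (walk_avoid_or_ends _ _ _ HL f) as [H|[H|H]]; auto.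
Qed.

Lemma walk_avoid_connected_to_src f u : (f < length E)%nat -> (u < N)%nat ->
  walk_avoid f (src f) (dst f) -> walk_avoid f u (src f).
Proof.
  intros Hf Hu Hsd. destruct (walk_avoid_to_end f u Hf Hu); auto.
  eapply walk_avoid_trans; eauto. apply walk_avoid_sym; auto.
Qed.

(* Removing an edge leaves [length E - 1 < N - 1] edges, too few to keep [N] vertices connected. *)
Lemma tree_edge_is_bridge f : (f < length E)%nat -> ~ walk_avoid f (src f) (dst f).
Proof.
  intros Hf Hsd.
  set (Es := map (fun e => (src e, dst e)) (remove Nat.eq_dec f (seq 0 (length E)))).
  assert (Hreach : forall u v, walk_avoid f u v -> reach Es u v).
  { induction 1 as [|e u w v He Hef Hadj _ IH]; [constructor|].
    apply reach_step with w; auto.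
    assert (In (src e, dst e) Es).
    { apply (in_map (fun e => (src e, dst e))). apply in_in_remove; auto. apply in_seq; lia. }
    destruct Hadj as [[<- <-]|[<- <-]]; auto. }
  assert (Hlen : (N <= S (length Es))%nat).
  { apply connected_edges_length. intros u v Hu Hv. apply Hreach.
    eapply walk_avoid_trans; [apply walk_avoid_connected_to_src; eauto|].
    apply walk_avoid_sym, walk_avoid_connected_to_src; auto. }
  unfold Es in Hlen. rewrite length_map in Hlen.
  pose proof (remove_length_lt Nat.eq_dec (seq 0 (length E)) f ltac:(apply in_seq; lia)).
  rewrite length_seq in *. lia.
Qed.

Definition vcoord f v : R :=
  if excluded_middle_informative (walk_avoid f v (src f)) then 0 else len f.

Definition coord f x : R :=
  match x with
  | PV v => vcoord f v
  | PE e s => if Nat.eq_dec f e then s else vcoord f (src e)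
  end.

Definition tdist x y := sumR (length E) (fun f => Rabs (coord f x - coord f y)).

Lemma tdist_sym x y : tdist x y = tdist y x.
Proof. apply sumR_ext. intros. apply Rabs_minus_sym. Qed.

Lemma tdist_triangle x y z : tdist x z <= tdist x y + tdist y z.
Proof.
  unfold tdist. rewrite <- sumR_add. apply sumR_le. intros.
  replace (coord i x - coord i z) with ((coord i x - coord i y) + (coord i y - coord i z))
    by ring.
  apply Rabs_triang.
Qed.

Lemma tdist_refl x : tdist x x = 0.
Proof.
  unfold tdist. rewrite (sumR_ext _ _ (fun _ => 0)), sumR_zero; auto.
  intros. rewrite Rminus_diag. apply Rabs_R0.
Qed.

Lemma tdist_nonneg x y : 0 <= tdist x y.
Proof. rewrite <- (sumR_zero (length E)). apply sumR_le. intros; apply Rabs_pos. Qed.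

Lemma vcoord_cases f v : vcoord f v = 0 \/ vcoord f v = len f.
Proof. unfold vcoord. destruct (excluded_middle_informative _); auto. Qed.

Lemma vcoord_range f v : (f < length E)%nat -> 0 <= vcoord f v <= len f.
Proof. intros Hf. pose proof (len_pos f Hf). destruct (vcoord_cases f v) as [->| ->]; lra. Qed.

Lemma vcoord_src f : vcoord f (src f) = 0.
Proof.
  unfold vcoord. destruct (excluded_middle_informative _) as [|Hn]; auto.
  exfalso; apply Hn; constructor.
Qed.

Lemma vcoord_dst f : (f < length E)%nat -> vcoord f (dst f) = len f.
Proof.
  intros Hf. unfold vcoord. destruct (excluded_middle_informative _) as [H|]; auto.
  exfalso. apply (tree_edge_is_bridge f Hf). apply walk_avoid_sym; auto.
Qed.

Lemma vcoord_walk_avoid f u v : walk_avoid f u v -> vcoord f u = vcoord f v.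
Proof.
  intros H. unfold vcoord.
  destruct (excluded_middle_informative (walk_avoid f u (src f))) as [H1|H1];
  destruct (excluded_middle_informative (walk_avoid f v (src f))) as [H2|H2]; auto.
  - exfalso. apply H2. eapply walk_avoid_trans; eauto. apply walk_avoid_sym; auto.
  - exfalso. apply H1. eapply walk_avoid_trans; eauto.
Qed.

Lemma walk_avoid_of_vcoord f u v : (f < length E)%nat -> (u < N)%nat -> (v < N)%nat ->
  vcoord f u = vcoord f v -> walk_avoid f u v.
Proof.
  intros Hf Hu Hv Heq. unfold vcoord in Heq. pose proof (len_pos f Hf).
  destruct (excluded_middle_informative (walk_avoid f u (src f))) as [H1|H1];
  destruct (excluded_middle_informative (walk_avoid f v (src f))) as [H2|H2]; try lra.
  - eapply walk_avoid_trans; eauto. apply walk_avoid_sym; auto.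
  - destruct (walk_avoid_to_end f u Hf Hu); [tauto|].
    destruct (walk_avoid_to_end f v Hf Hv); [tauto|].
    eapply walk_avoid_trans; eauto. apply walk_avoid_sym; auto.
Qed.

Lemma vcoord_adj f e u w : (e < length E)%nat -> e <> f -> adj e u w -> vcoord f u = vcoord f w.
Proof. intros. apply vcoord_walk_avoid. eapply walk_avoid_step; eauto. Qed.

Lemma vcoord_src_dst f e : (e < length E)%nat -> e <> f -> vcoord f (src e) = vcoord f (dst e).
Proof. intros. apply (vcoord_adj f e); auto. left; auto. Qed.

Lemma vcoord_adj_self e u w : (e < length E)%nat -> adj e u w ->
  Rabs (vcoord e u - vcoord e w) = len e.
Proof.
  intros He [[<- <-]|[<- <-]]; rewrite vcoord_src, vcoord_dst by auto; pose proof (len_pos e He).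
  - rewrite Rabs_left by lra. ring.
  - rewrite Rabs_right by lra. ring.
Qed.

Lemma walk_avoid_switch f e u v : walk_avoid f u v -> ~ walk_avoid f u (src e) -> walk_avoid e u v.
Proof.
  induction 1 as [|g u w v Hg Hgf Hadj Hw IH]; intros Hn; [constructor|].
  assert (g <> e).
  { intros ->. destruct Hadj as [[H1 H2]|[H1 H2]].
    - apply Hn. rewrite H1. constructor.
    - apply Hn. eapply walk_avoid_step; eauto. rewrite <- H1. right; auto. }
  eapply walk_avoid_cons; eauto. apply IH. intros Hw'. apply Hn.
  eapply walk_avoid_trans; [|exact Hw']. eapply walk_avoid_step; eauto.
Qed.

Lemma vcoord_same_side f e u v : (f < length E)%nat -> (u < N)%nat -> (v < N)%nat ->
  vcoord f u = vcoord f v -> vcoord f u <> vcoord f (src e) -> vcoord e u = vcoord e v.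
Proof.
  intros Hf Hu Hv H1 H2. apply vcoord_walk_avoid. apply walk_avoid_switch with f.
  - apply walk_avoid_of_vcoord; auto.
  - intros Hw. apply H2. apply vcoord_walk_avoid; auto.
Qed.


Lemma tdist_adj e u w : (e < length E)%nat -> adj e u w -> tdist (PV u) (PV w) = len e.
Proof.
  intros He Hadj. unfold tdist. simpl. rewrite (sumR_single _ _ e He).
  - apply vcoord_adj_self; auto.
  - intros f Hf Hfe. rewrite (vcoord_adj f e u w), Rminus_diag by auto. apply Rabs_R0.
Qed.

Lemma tdist_walk_le u v L : walk E u v L -> tdist (PV u) (PV v) <= L.
Proof.
  induction 1 as [u|e u w v L He Hadj Hw IH]; [rewrite tdist_refl; lra|].
  pose proof (tdist_triangle (PV u) (PV w) (PV v)).
  rewrite (tdist_adj e u w He Hadj) in H. unfold len in H. lra.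
Qed.

Inductive walkn : nat -> nat -> nat -> Prop :=
| walkn_nil u : walkn 0 u u
| walkn_cons k e u w v : (e < length E)%nat -> adj e u w -> walkn k w v -> walkn (S k) u v.

Lemma walkn_of_walk u v L : walk E u v L -> exists k, walkn k u v.
Proof.
  induction 1 as [u|e u w v L He Hadj Hw [k Hk]]; [exists 0%nat; constructor|].
  exists (S k). econstructor; eauto.
Qed.

Lemma walkn_split_at_edge e k w v : walkn k w v -> ~ walk_avoid e w v ->
  exists x y j, (j < k)%nat /\ walk_avoid e w x /\ adj e x y /\ walkn j y v.
Proof.
  induction 1 as [u|k g u w' v Hg Hadj Hw IH]; intros Hn; [exfalso; apply Hn; constructor|].
  destruct (Nat.eq_dec g e) as [->|Hge].
  - exists u, w', k. repeat split; auto. constructor.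
  - assert (Huw : walk_avoid e u w') by (eapply walk_avoid_step; eauto).
    destruct IH as [x [y [j [Hj [H1 [H2 H3]]]]]].
    { intros H. apply Hn. eapply walk_avoid_trans; eauto. }
    exists x, y, j. repeat split; auto. eapply walk_avoid_trans; eauto.
Qed.

(* A walk that leaves [u] through an edge not separating [u] from [v] must cross that edge
   back, and the part after the return crossing is a shorter walk from [u]. *)
Lemma walkn_shortcut k e u w v : (e < length E)%nat -> adj e u w ->
  vcoord e u = vcoord e v -> walkn k w v -> exists j, (j < k)%nat /\ walkn j u v.
Proof.
  intros He Hadj Heq Hw.
  assert (Hwu : vcoord e w <> vcoord e u).
  { intros H. pose proof (vcoord_adj_self e u w He Hadj). pose proof (len_pos e He).
    rewrite H, Rminus_diag, Rabs_R0 in H0. lra. }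
  destruct (walkn_split_at_edge e k w v Hw) as [x [y [j [Hj [Hwx [Hxy Hy]]]]]].
  { intros Hx. apply vcoord_walk_avoid in Hx. congruence. }
  apply vcoord_walk_avoid in Hwx.
  assert (y = u); [|subst; exists j; auto].
  destruct Hadj as [[A1 A2]|[A1 A2]]; destruct Hxy as [[B1 B2]|[B1 B2]]; subst; congruence.
Qed.

Lemma tdist_adj_separating e u w v : (e < length E)%nat -> adj e u w ->
  vcoord e u <> vcoord e v -> tdist (PV u) (PV v) = len e + tdist (PV w) (PV v).
Proof.
  intros He Hadj Hne. unfold tdist; simpl.
  rewrite (sumR_split _ _ e He), (sumR_split _ (fun f => Rabs (vcoord f w - vcoord f v)) e He).
  rewrite (sumR_ext _ (fun i => if Nat.eq_dec i e then 0 else Rabs (vcoord i u - vcoord i v))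
             (fun i => if Nat.eq_dec i e then 0 else Rabs (vcoord i w - vcoord i v))).
  - pose proof (vcoord_adj_self e u w He Hadj). pose proof (len_pos e He).
    destruct (vcoord_cases e u) as [A|A]; destruct (vcoord_cases e v) as [B|B];
      destruct (vcoord_cases e w) as [C|C]; rewrite A, B, C in *;
      try lra; unfold Rabs in *; repeat destruct Rcase_abs; lra.
  - intros f Hf. destruct (Nat.eq_dec f e); auto. rewrite (vcoord_adj f e u w); auto.
Qed.

Lemma walk_of_tdist k u v : walkn k u v -> walk E u v (tdist (PV u) (PV v)).
Proof.
  revert u v. induction k as [k IH] using (well_founded_induction Wf_nat.lt_wf).
  intros u v Hw. destruct Hw as [u|k e u w v He Hadj Hw]; [rewrite tdist_refl; constructor|].
  destruct (Req_dec_T (vcoord e u) (vcoord e v)) as [Heq|Hne].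
  - destruct (walkn_shortcut k e u w v He Hadj Heq Hw) as [j [Hj Hu]].
    apply (IH j); auto.
  - rewrite (tdist_adj_separating e u w v He Hadj Hne).
    econstructor; [exact He|exact Hadj|apply (IH k); auto].
Qed.

Lemma vdist_tdist u v : (u < N)%nat -> (v < N)%nat -> vdist E u v = tdist (PV u) (PV v).
Proof.
  intros Hu Hv. destruct (Hconn u v Hu Hv) as [L HL].
  destruct (walkn_of_walk _ _ _ HL) as [k Hk].
  assert (Hi : is_vdist E u v (tdist (PV u) (PV v))).
  { split; [apply (walk_of_tdist k); auto|]. apply tdist_walk_le. }
  unfold vdist. destruct (epsilon_spec (inhabits 0) (is_vdist E u v) (ex_intro _ _ Hi)) as [H1 H2].
  destruct Hi as [H3 H4]. specialize (H2 _ H3). specialize (H4 _ H1). lra.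
Qed.

Lemma coord_PE_self e s : coord e (PE e s) = s.
Proof. simpl. destruct (Nat.eq_dec e e); congruence. Qed.

Lemma coord_PE_other f e s : f <> e -> coord f (PE e s) = vcoord f (src e).
Proof. intros. simpl. destruct (Nat.eq_dec f e); congruence. Qed.

Lemma dpv_tdist e s v : (e < length E)%nat -> 0 <= s <= len e -> (v < N)%nat ->
  dpv E (PE e s) v = tdist (PE e s) (PV v).
Proof.
  intros He Hs Hv. unfold dpv. fold (src e) (dst e) (len e).
  rewrite !vdist_tdist by auto using src_lt, dst_lt.
  apply (Rmin_sumR_through_ends (length E) e (fun f => coord f (PE e s))
    (fun f => vcoord f (src e)) (fun f => vcoord f (dst e)) (fun f => vcoord f v));
    auto using vcoord_src, vcoord_dst, coord_PE_self, vcoord_cases.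
  intros f Hf Hfe. rewrite coord_PE_other by auto. auto using vcoord_src_dst.
Qed.

Lemma tdist_same_edge e s t : (e < length E)%nat -> tdist (PE e s) (PE e t) = Rabs (s - t).
Proof.
  intros He. unfold tdist. rewrite (sumR_single _ _ e He), !coord_PE_self; auto.
  intros f Hf Hfe. rewrite !coord_PE_other, Rminus_diag by auto. apply Rabs_R0.
Qed.

Lemma dist_tdist x y : valid_pt N E x -> valid_pt N E y -> Defs.dist E x y = tdist x y.
Proof.
  intros Hx Hy. destruct x as [u|e s]; destruct y as [v|e' t]; simpl in Hx, Hy.
  - change (vdist E v u = tdist (PV u) (PV v)). rewrite vdist_tdist by auto. apply tdist_sym.
  - change (dpv E (PE e' t) u = tdist (PV u) (PE e' t)).
    rewrite dpv_tdist by (unfold len; tauto). apply tdist_sym.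
  - change (dpv E (PE e s) v = tdist (PE e s) (PV v)). apply dpv_tdist; unfold len; tauto.
  - unfold Defs.dist. destruct (Nat.eq_dec e e') as [<-|Hee'].
    { rewrite tdist_same_edge; tauto. }
    fold (src e) (dst e) (len e).
    rewrite !dpv_tdist by (unfold len; try tauto; first [apply src_lt | apply dst_lt]; tauto).
    rewrite (tdist_sym (PE e' t)), (tdist_sym (PE e' t)).
    apply (Rmin_sumR_through_ends (length E) e (fun f => coord f (PE e s))
      (fun f => vcoord f (src e)) (fun f => vcoord f (dst e)) (fun f => coord f (PE e' t)));
      auto using vcoord_src, coord_PE_self; try tauto.
    + intros f Hf Hfe. rewrite coord_PE_other by auto. split; auto.
      apply vcoord_src_dst; [tauto|congruence].
    + apply vcoord_dst; tauto.
    + rewrite coord_PE_other by congruence. apply vcoord_cases.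
Qed.

Lemma coord_range f x : (f < length E)%nat -> valid_pt N E x -> 0 <= coord f x <= len f.
Proof.
  intros Hf Hx. destruct x as [v|e s]; simpl; [apply vcoord_range; auto|].
  destruct (Nat.eq_dec f e) as [->|]; [simpl in Hx; unfold len; lra|apply vcoord_range; auto].
Qed.

Lemma coord_cases f x : (forall s, x <> PE f s) -> coord f x = 0 \/ coord f x = len f.
Proof.
  intros H. destruct x as [v|e s]; simpl; [apply vcoord_cases|].
  destruct (Nat.eq_dec f e) as [->|]; [exfalso; apply (H s); auto|apply vcoord_cases].
Qed.

Definition between x z y :=
  forall f, (f < length E)%nat -> Rbetween (coord f x) (coord f z) (coord f y).

Lemma tdist_between x z y : between x z y -> tdist x z + tdist z y = tdist x y.
Proof. intros H. unfold tdist. rewrite <- sumR_add. apply sumR_ext. exact H. Qed.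

Lemma between_vertex_iff f x v y : (f < length E)%nat -> valid_pt N E x -> valid_pt N E y ->
  Rbetween (coord f x) (coord f (PV v)) (coord f y) <->
  coord f x = vcoord f v \/ coord f y = vcoord f v.
Proof.
  intros. apply (Rbetween_end _ _ _ (len f)); auto using coord_range, len_pos.
  apply vcoord_cases.
Qed.

(* A point of the tree strictly off one side of [f] and one side of [g] has a vertex
   with the same property, an endpoint of its edge. *)
Lemma vertex_off_sides x f g A B : valid_pt N E x -> (f < length E)%nat -> (g < length E)%nat ->
  f <> g -> (A = 0 \/ A = len f) -> (B = 0 \/ B = len g) -> coord f x <> A -> coord g x <> B ->
  exists w, (w < N)%nat /\ vcoord f w <> A /\ vcoord g w <> B.
Proof.
  intros Hx Hf Hg Hfg HA HB H1 H2. pose proof (len_pos f Hf). pose proof (len_pos g Hg).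
  destruct x as [u|e t]; simpl in *; [exists u; auto|].
  destruct (Nat.eq_dec f e) as [->|Hfe]; [|destruct (Nat.eq_dec g e) as [->|Hge]].
  - destruct (Nat.eq_dec g e); [congruence|]. destruct HA as [->| ->].
    + exists (dst e). rewrite vcoord_dst, <- vcoord_src_dst by (tauto || congruence).
      split; [apply dst_lt; tauto|]. split; [lra|auto].
    + exists (src e). rewrite vcoord_src. split; [apply src_lt; tauto|]. split; [lra|auto].
  - destruct HB as [->| ->].
    + exists (dst e). rewrite vcoord_dst, <- vcoord_src_dst by (tauto || congruence).
      split; [apply dst_lt; tauto|]. split; [auto|lra].
    + exists (src e). rewrite vcoord_src. split; [apply src_lt; tauto|]. split; [auto|lra].
  - exists (src e). split; [apply src_lt; tauto|]. auto.
Qed.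

(* Two edges [f], [g] witnessing that [v] is neither on the way from [c] nor from [w] to [q]
   would, together with [q], force a cycle in the tree. *)
Lemma between_escape_edges_absurd c q v w f g :
  valid_pt N E c -> valid_pt N E q -> (v < N)%nat -> (w < N)%nat ->
  between c (PV v) (PV w) -> (f < length E)%nat -> (g < length E)%nat ->
  coord f c <> vcoord f v -> coord f q <> vcoord f v ->
  vcoord g w <> vcoord g v -> coord g q <> vcoord g v -> False.
Proof.
  intros Hc Hq Hv Hw Hcvw Hf Hg Hcf Hqf Hwg Hqg.
  assert (Hwf : vcoord f w = vcoord f v).
  { pose proof (Hcvw f Hf) as H.
    apply between_vertex_iff in H; auto; simpl; auto. tauto. }
  assert (Hcg : coord g c = vcoord g v).
  { pose proof (Hcvw g Hg) as H.
    apply between_vertex_iff in H; auto; simpl; auto. tauto. }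
  assert (Hfg : f <> g) by (intros ->; congruence).
  pose proof (len_pos g Hg).
  destruct (vertex_off_sides c f g (vcoord f v) (len g - vcoord g v) Hc Hf Hg Hfg
    (vcoord_cases f v)) as [wc [Hwc [Hwcf Hwcg]]]; auto.
  { destruct (vcoord_cases g v) as [-> | ->]; [right|left]; ring. }
  { rewrite Hcg. destruct (vcoord_cases g v) as [-> | ->]; lra. }
  destruct (vertex_off_sides q f g (vcoord f v) (vcoord g v) Hq Hf Hg Hfg
    (vcoord_cases f v) (vcoord_cases g v) Hqf Hqg) as [wq [Hwq [Hwqf Hwqg]]].
  assert (Hwcg' : vcoord g wc = vcoord g v).
  { destruct (vcoord_cases g v) as [A|A]; destruct (vcoord_cases g wc) as [B|B];
      rewrite A, B in *; lra. }
  destruct (Req_dec_T (vcoord g (src f)) (vcoord g v)) as [Heq|Hne].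
  - assert (vcoord g w = vcoord g wq)
      by (apply (eq_of_two_values _ _ (vcoord g v) (len g)); auto using vcoord_cases).
    assert (vcoord f w = vcoord f wq) by (apply (vcoord_same_side g f w wq); auto; congruence).
    congruence.
  - assert (vcoord f v = vcoord f wc) by (apply (vcoord_same_side g f v wc); auto).
    congruence.
Qed.

Lemma between_dichotomy c q v w :
  valid_pt N E c -> valid_pt N E q -> (v < N)%nat -> (w < N)%nat ->
  between c (PV v) (PV w) -> between c (PV v) q \/ between (PV w) (PV v) q.
Proof.
  intros Hc Hq Hv Hw Hcvw. apply NNPP. intros Hn. apply not_or_and in Hn.
  destruct Hn as [Hn1 Hn2].
  apply not_all_ex_not in Hn1. destruct Hn1 as [f Hn1]. apply imply_to_and in Hn1.
  apply not_all_ex_not in Hn2. destruct Hn2 as [g Hn2]. apply imply_to_and in Hn2.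
  destruct Hn1 as [Hf Hn1], Hn2 as [Hg Hn2].
  rewrite between_vertex_iff in Hn1, Hn2 by (simpl; auto).
  apply not_or_and in Hn1. apply not_or_and in Hn2.
  exact (between_escape_edges_absurd c q v w f g Hc Hq Hv Hw Hcvw Hf Hg
    (proj1 Hn1) (proj2 Hn1) (proj1 Hn2) (proj2 Hn2)).
Qed.

(* Convexity of [tdist _ q] along the path from [c] to [w]. *)
Lemma tdist_convex c q v w : valid_pt N E c -> valid_pt N E q -> (v < N)%nat -> (w < N)%nat ->
  between c (PV v) (PV w) ->
  (tdist c (PV v) + tdist (PV v) (PV w)) * tdist (PV v) q <=
     tdist (PV v) (PV w) * tdist c q + tdist c (PV v) * tdist (PV w) q.
Proof.
  intros Hc Hq Hv Hw Hcvw.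
  pose proof (tdist_nonneg c (PV v)). pose proof (tdist_nonneg (PV v) (PV w)).
  pose proof (tdist_triangle (PV v) (PV w) q). pose proof (tdist_triangle (PV v) c q).
  rewrite (tdist_sym (PV v) c) in H2.
  destruct (between_dichotomy c q v w Hc Hq Hv Hw Hcvw) as [Hd|Hd];
    apply tdist_between in Hd.
  - rewrite <- Hd. nra.
  - rewrite (tdist_sym (PV w)) in Hd. rewrite <- Hd. nra.
Qed.

Lemma edge_end_toward e y : (e < length E)%nat ->
  exists x, (x = src e \/ x = dst e) /\ vcoord e x = vcoord e y.
Proof.
  intros He. destruct (vcoord_cases e y) as [A|A].
  - exists (src e). rewrite vcoord_src; auto.
  - exists (dst e). rewrite vcoord_dst; auto.
Qed.

Lemma vcoord_edge_end f e x : (e < length E)%nat -> f <> e -> (x = src e \/ x = dst e) ->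
  vcoord f x = vcoord f (src e).
Proof. intros He Hfe [-> | ->]; auto. symmetry; apply vcoord_src_dst; auto. Qed.

Lemma edge_end_lt e x : (e < length E)%nat -> (x = src e \/ x = dst e) -> (x < N)%nat.
Proof. intros He [-> | ->]; [apply src_lt|apply dst_lt]; auto. Qed.

Lemma edge_end_between e a y x : (e < length E)%nat -> (a < N)%nat -> (y < N)%nat ->
  vcoord e a <> vcoord e y -> (x = src e \/ x = dst e) -> vcoord e x = vcoord e y ->
  between (PV a) (PV x) (PV y).
Proof.
  intros He Ha Hy Hay Hx Hxy f Hf. destruct (Nat.eq_dec f e) as [->|Hfe].
  { simpl. rewrite Hxy. apply Rbetween_refl_r. }
  rewrite between_vertex_iff by (simpl; auto).
  destruct (Req_dec_T (vcoord f a) (vcoord f x)); auto.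
  destruct (Req_dec_T (vcoord f y) (vcoord f x)); auto. exfalso.
  assert (vcoord f a = vcoord f y)
    by (apply (eq_of_two_values _ _ (vcoord f x) (len f)); auto using vcoord_cases).
  apply Hay, (vcoord_same_side f e); auto. rewrite <- (vcoord_edge_end f e x); auto.
Qed.

Lemma edge_point_between e s a y : (e < length E)%nat -> (a < N)%nat -> (y < N)%nat ->
  0 <= s <= len e -> vcoord e a <> vcoord e y -> between (PV a) (PE e s) (PV y).
Proof.
  intros He Ha Hy Hs Hay f Hf. destruct (Nat.eq_dec f e) as [->|Hfe].
  - rewrite coord_PE_self. simpl. pose proof (len_pos e He).
    destruct (vcoord_cases e a) as [A|A], (vcoord_cases e y) as [B|B];
      rewrite A, B in *; try congruence; unfold Rbetween, Rabs; repeat destruct Rcase_abs; lra.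
  - destruct (edge_end_toward e y He) as [x [Hx Hxy]].
    rewrite coord_PE_other, <- (vcoord_edge_end f e x) by auto.
    apply (edge_end_between e a y x); auto.
Qed.

Lemma tdist_lt_edge_end c e x z : valid_pt N E c -> (e < length E)%nat ->
  (x = src e \/ x = dst e) -> (z < N)%nat ->
  coord e c = vcoord e x -> vcoord e x <> vcoord e z -> tdist c (PV x) < tdist c (PV z).
Proof.
  intros Hc He Hx Hz Hcx Hxz. unfold tdist. apply (sumR_lt _ _ _ e); auto.
  - intros f Hf. simpl. destruct (Nat.eq_dec f e) as [->|Hfe].
    { rewrite Hcx, Rminus_diag, Rabs_R0. apply Rabs_pos. }
    destruct (Req_dec_T (vcoord f x) (vcoord f z)) as [->|Hne]; [lra|].
    destruct (Req_dec_T (coord f c) (vcoord f x)) as [->|Hne'].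
    { rewrite Rminus_diag, Rabs_R0. apply Rabs_pos. }
    exfalso.
    destruct (vertex_off_sides c f e (vcoord f x) (vcoord e z) Hc Hf He Hfe
      (vcoord_cases f x) (vcoord_cases e z) Hne' ltac:(congruence)) as [r [Hr [Hrf Hre]]].
    assert (vcoord f r = vcoord f z)
      by (apply (eq_of_two_values _ _ (vcoord f x) (len f)); auto using vcoord_cases).
    apply Hre, (vcoord_same_side f e); auto.
    rewrite <- (vcoord_edge_end f e x); congruence.
  - simpl. rewrite Hcx, Rminus_diag, Rabs_R0. apply Rabs_pos_lt. lra.
Qed.

Definition in_hull n (p : nat -> nat) z := exists a b, (a < n)%nat /\ (b < n)%nat /\
  between (PV (p a)) z (PV (p b)).

Lemma in_hull_refl n (p : nat -> nat) i : (i < n)%nat -> in_hull n p (PV (p i)).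
Proof. intros Hi. exists i, i. do 2 (split; auto). intros f Hf. apply Rbetween_refl_l. Qed.

(* The vertex [z] of the hull nearest to a point [c] outside it lies on the way from [c] to
   every median: an edge separating [z] from [c] and from some [p i] would yield either a
   nearer hull vertex (its endpoint toward [p i]) or, if [c] lies on it, put [c] in the hull. *)
Lemma nearest_hull_vertex_between n p c z i : (forall i, (i < n)%nat -> (p i < N)%nat) ->
  valid_pt N E c -> ~ in_hull n p c -> (z < N)%nat -> in_hull n p (PV z) ->
  (forall v, (v < N)%nat -> in_hull n p (PV v) -> tdist c (PV z) <= tdist c (PV v)) ->
  (i < n)%nat -> between c (PV z) (PV (p i)).
Proof.
  intros Hp Hc Hout Hz [a0 [b0 [Ha0 [Hb0 Hzab]]]] Hmin Hi e He. apply NNPP. intros Hnb.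
  assert (Hpi := Hp i Hi).
  rewrite between_vertex_iff in Hnb by (simpl; auto). apply not_or_and in Hnb.
  destruct Hnb as [Hce Hpe]. simpl in Hpe.
  assert (Ha : exists a, (a < n)%nat /\ vcoord e (p a) = vcoord e z).
  { pose proof (Hzab e He) as H. rewrite between_vertex_iff in H by (simpl; auto).
    destruct H; [exists a0|exists b0]; auto. }
  destruct Ha as [a [Ha Haz]].
  destruct (edge_end_toward e (p i) He) as [x [Hx Hxi]].
  assert (Hhull : in_hull n p (PV x)).
  { exists a, i. do 2 (split; auto). apply (edge_end_between e); auto. congruence. }
  destruct (classic (exists s, c = PE e s)) as [[s ->]|Hnot].
  - apply Hout. exists a, i. do 2 (split; auto).
    apply edge_point_between; auto; [simpl in Hc; unfold len; tauto|congruence].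
  - assert (Hcx : coord e c = vcoord e x).
    { pose proof (coord_cases e c (fun s Hs => Hnot (ex_intro _ s Hs))).
      rewrite Hxi. apply (eq_of_two_values _ _ (vcoord e z) (len e)); auto using vcoord_cases. }
    pose proof (tdist_lt_edge_end c e x z Hc He Hx Hz Hcx ltac:(congruence)).
    pose proof (Hmin x (edge_end_lt e x He Hx) Hhull). lra.
Qed.

Lemma hull_projection n p c : (0 < n)%nat -> (forall i, (i < n)%nat -> (p i < N)%nat) ->
  valid_pt N E c ->
  exists z, valid_pt N E z /\ in_hull n p z /\
    (z = c \/ exists v, z = PV v /\ (v < N)%nat /\
       forall i, (i < n)%nat -> between c (PV v) (PV (p i))).
Proof.
  intros Hn Hp Hc. destruct (classic (in_hull n p c)) as [Hin|Hout].
  { exists c. auto. }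
  destruct (exists_argmin_lt (fun v => in_hull n p (PV v)) (fun v => tdist c (PV v)) N)
    as [z [Hz [Hhull Hmin]]].
  { exists (p 0%nat). split; auto using in_hull_refl. }
  exists (PV z). split; [simpl; auto|]. split; auto. right. exists z. do 2 (split; auto).
  intros i Hi. apply (nearest_hull_vertex_between n); auto.
Qed.

Lemma in_hull_min_subtree n p z : (forall i, (i < n)%nat -> (p i < N)%nat) ->
  valid_pt N E z -> in_hull n p z -> in_min_subtree N E n p z.
Proof.
  intros Hp Hz [a [b [Ha [Hb Hab]]]] X HX HXp.
  apply (HX (PV (p a)) (PV (p b)) z); try (simpl; auto; fail).
  rewrite !dist_tdist by (simpl; auto). apply tdist_between; auto.
Qed.

Section Covering.
Variables (n : nat) (w : nat -> R) (m : nat -> nat) (loc : nat -> nat -> pt)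
  (f : nat -> nat -> R) (p : nat -> nat) (lam : R).
Hypothesis Hn : (0 < n)%nat.
Hypothesis Hunc : forall i, (i < n)%nat ->
  0 <= w i /\ (forall j, (j < m i)%nat -> valid_pt N E (loc i j) /\ 0 <= f i j) /\
  sumR (m i) (f i) = 1.
Hypothesis Hp : forall i, (i < n)%nat -> (p i < N)%nat.
Hypothesis Hcov : forall i, (i < n)%nat -> Ed E w m loc f (PV (p i)) i <= lam.

Lemma Ed_scal A x i : A * Ed E w m loc f x i =
  w i * sumR (m i) (fun j => f i j * (A * Defs.dist E x (loc i j))).
Proof.
  unfold Ed. rewrite <- !sumR_scal. apply sumR_ext. intros; ring.
Qed.

Lemma Ed_combination i z c y A B C : (i < n)%nat ->
  (forall j, (j < m i)%nat ->
     A * Defs.dist E z (loc i j) <= B * Defs.dist E c (loc i j) + C * Defs.dist E y (loc i j)) ->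
  A * Ed E w m loc f z i <= B * Ed E w m loc f c i + C * Ed E w m loc f y i.
Proof.
  intros Hi H. destruct (Hunc i Hi) as [Hw [Hloc _]].
  rewrite !Ed_scal, <- Rmult_plus_distr_l, <- sumR_add.
  apply Rmult_le_compat_l; auto. apply sumR_le. intros j Hj.
  destruct (Hloc j Hj) as [_ Hf]. specialize (H j Hj). nra.
Qed.

(* A vertex on the way from a center [c] to the median [p i] covers [P_i] whenever [c] does:
   [Ed _ i] is convex along that path and at most [lam] at both ends. *)
Lemma Ed_between_le c v i : valid_pt N E c -> (v < N)%nat -> (i < n)%nat ->
  between c (PV v) (PV (p i)) -> Ed E w m loc f c i <= lam -> Ed E w m loc f (PV v) i <= lam.
Proof.
  intros Hc Hv Hi Hbtw Hci. destruct (Hunc i Hi) as [_ [Hloc _]].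
  pose proof (Hcov i Hi) as Hpi. pose proof (Hp i Hi).
  pose proof (tdist_nonneg c (PV v)). pose proof (tdist_nonneg (PV v) (PV (p i))).
  destruct (Req_dec_T (tdist c (PV v)) 0) as [Hcv|Hcv].
  - assert (1 * Ed E w m loc f (PV v) i <=
              1 * Ed E w m loc f c i + 0 * Ed E w m loc f (PV (p i)) i); [|lra].
    apply Ed_combination; auto. intros j Hj. destruct (Hloc j Hj) as [Hq _].
    rewrite !dist_tdist by (simpl; auto).
    pose proof (tdist_triangle (PV v) c (loc i j)). rewrite (tdist_sym (PV v) c), Hcv in H2. lra.
  - set (A := tdist c (PV v)) in *. set (B := tdist (PV v) (PV (p i))) in *.
    assert ((A + B) * Ed E w m loc f (PV v) i <=
              B * Ed E w m loc f c i + A * Ed E w m loc f (PV (p i)) i).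
    { apply Ed_combination; auto. intros j Hj. destruct (Hloc j Hj) as [Hq _].
      rewrite !dist_tdist by (simpl; auto). apply tdist_convex; auto. }
    assert ((A + B) * Ed E w m loc f (PV v) i <= (A + B) * lam) by nra.
    apply Rmult_le_reg_l with (A + B); lra.
Qed.

Lemma center_in_min_subtree c : valid_pt N E c ->
  exists z, valid_pt N E z /\ in_min_subtree N E n p z /\
    forall i, (i < n)%nat -> Ed E w m loc f c i <= lam -> Ed E w m loc f z i <= lam.
Proof.
  intros Hc. destruct (hull_projection n p c Hn Hp Hc) as [z [Hz [Hhull Hcase]]].
  exists z. split; auto. split; [apply in_hull_min_subtree; auto|].
  intros i Hi Hci. destruct Hcase as [->|[v [-> [Hv Hbtw]]]]; auto.
  apply (Ed_between_le c); auto.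
Qed.

Lemma centers_in_min_subtree C0 : (forall c, In c C0 -> valid_pt N E c) ->
  exists C, length C = length C0 /\
    (forall c, In c C -> valid_pt N E c /\ in_min_subtree N E n p c) /\
    (forall i, (i < n)%nat -> (exists c, In c C0 /\ Ed E w m loc f c i <= lam) ->
       exists c, In c C /\ Ed E w m loc f c i <= lam).
Proof.
  induction C0 as [|c C0 IH]; intros Hv.
  { exists []. split; auto. split; [simpl; tauto|]. intros i Hi [c [[] _]]. }
  destruct IH as [C [Hl [HC HCcov]]]; [intros; apply Hv; simpl; auto|].
  destruct (center_in_min_subtree c (Hv c (or_introl eq_refl))) as [z [Hz [Hzm Hzc]]].
  exists (z :: C). split; [simpl; auto|]. split.
  - intros c' [<-|Hc']; auto.
  - intros i Hi [c' [[<-|Hc'] Hle]].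
    + exists z. split; [simpl; auto|]. auto.
    + destruct (HCcov i Hi) as [c'' [H1 H2]]; [exists c'; auto|]. exists c''. simpl; auto.
Qed.

End Covering.

End Tree.

Theorem lemma2 (N : nat) (E : list edge) (HT : is_tree N E)
  (n : nat) (w : nat -> R) (m : nat -> nat) (loc : nat -> nat -> pt)
  (f : nat -> nat -> R) (p : nat -> nat) (lam : R)
  (Hlam : 0 <= lam)
  (Hunc : forall i, (i < n)%nat ->
     0 <= w i /\
     (forall j, (j < m i)%nat -> valid_pt N E (loc i j) /\ 0 <= f i j) /\
     sumR (m i) (f i) = 1)
  (Hmed : forall i, (i < n)%nat ->
     (p i < N)%nat /\
     forall x, valid_pt N E x -> Ed E w m loc f (PV (p i)) i <= Ed E w m loc f x i)
  (Hcov : forall i, (i < n)%nat -> Ed E w m loc f (PV (p i)) i <= lam) :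
  exists C : list pt,
    (forall c, In c C -> valid_pt N E c /\ in_min_subtree N E n p c) /\
    covers_all E n w m loc f lam C /\
    (forall C' : list pt, (forall c, In c C' -> valid_pt N E c) ->
       covers_all E n w m loc f lam C' -> (length C <= length C')%nat).
Proof.
  destruct HT as [Hedge [HN Hconn]].
  destruct (Nat.eq_dec n 0) as [->|Hn].
  { exists []. split; [simpl; tauto|]. split; [intros i Hi; lia|]. intros; simpl; lia. }
  assert (Hp : forall i, (i < n)%nat -> (p i < N)%nat) by (intros i Hi; apply Hmed; auto).
  set (cover_size k := exists C, (forall c, In c C -> valid_pt N E c) /\
    covers_all E n w m loc f lam C /\ length C = k).
  assert (Hmedians : cover_size n).
  { exists (map (fun i => PV (p i)) (seq 0 n)). split; [|split].
    - intros c Hc. apply in_map_iff in Hc. destruct Hc as [i [<- Hi]]. apply in_seq in Hi.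
      simpl. apply Hp. lia.
    - intros i Hi. exists (PV (p i)). split; [|apply Hcov; auto].
      apply in_map_iff. exists i. split; auto. apply in_seq. lia.
    - rewrite length_map, length_seq. auto. }
  destruct (dec_inh_nat_subset_has_unique_least_element cover_size (fun k => classic _)
    (ex_intro _ n Hmedians)) as [k [[[C0 [HC0 [HC0cov HC0k]]] Hleast] _]].
  destruct (centers_in_min_subtree N E Hedge HN Hconn n w m loc f p lam ltac:(lia) Hunc Hp Hcov
    C0 HC0) as [C [Hlen [HC HCcov]]].
  exists C. split; [|split]; auto.
  - intros i Hi. apply HCcov; auto.
  - intros C' HC' HC'cov. rewrite Hlen, HC0k. apply Hleast. exists C'; auto.
Qed.
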